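(* Let $0<p\le q<\infty$ and let $k,l,n$ be positive integers. Put $\bar p=\min(1,p)$. Then $$ e_{k+l-1}\bigl(id:\ell_p^n(\mathbb{R})\to\ell_q^n(\mathbb{R})\bigr)\le 2^{1/\bar p}\, e^{p/q}_k\bigl(id:\ell_p^n(\mathbb{R})\to\ell_p^n(\mathbb{R})\bigr)\cdot e_l^{1-p/q}\bigl(id:\ell_p^n(\mathbb{R})\to\ell_\infty^n(\mathbb{R})\bigr). $$
   Context: For $0<p\le\infty$, $\ell_p^n(\mathbb{R})$ denotes $\mathbb{R}^n$ with the (quasi-)norm $\|x\|_p=(\sum_{i=1}^n|x_i|^p)^{1/p}$ for $p<\infty$ and $\|x\|_\infty=\max_i|x_i|$; its unit ball is $B_p^n$. For a bounded linear operator $T:X\to Y$ between quasi-Banach spaces and $k\in\mathbb{N}$, the $k$-th (dyadic) entropy number is $e_k(T)=\inf\{r>0:\exists y_1,\dots,y_{2^{k-1}}\in Y \text{ with } T(B_X)\subset\bigcup_{j=1}^{2^{k-1}}(y_j+rB_Y)\}$, where $B_X,B_Y$ are the closed unit balls. The identity $id:\ell_p^n\to\ell_q^n$ is the identity map on $\mathbb{R}^n$ viewed between these spaces. *)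

From HB Require Import structures.
From mathcomp Require Import all_boot all_order all_algebra.
From mathcomp Require Import all_classical all_reals all_analysis.
Set Implicit Arguments. Unset Strict Implicit. Unset Printing Implicit Defensive.
Import Order.TTheory GRing.Theory Num.Theory.
Local Open Scope classical_set_scope.
Local Open Scope ring_scope.

Definition vec (R : realType) (n : nat) := 'I_n -> R.

Definition lpnorm (R : realType) (n : nat) (p : R) (x : vec R n) : R :=
  (\sum_(i < n) `|x i| `^ p) `^ p^-1.

Definition linfnorm (R : realType) (n : nat) (x : vec R n) : R :=
  \big[Num.max/0]_(i < n) `|x i|.

(* k-th dyadic entropy number of id : (R^n, nX) -> (R^n, nY):
   inf of r > 0 such that the unit ball of nX is covered by 2^(k-1)
   translates y_j + r B_Y of r times the closed unit ball of nY. *)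
Definition entropy_id (R : realType) (n : nat) (nX nY : vec R n -> R) (k : nat) : R :=
  inf [set r : R | 0 < r /\
        exists y : 'I_(2 ^ k.-1) -> vec R n,
          forall x : vec R n, nX x <= 1 ->
            exists (j : 'I_(2 ^ k.-1)) (z : vec R n),
              nY z <= 1 /\ x = (fun i => y j i + r * z i)].

From HB Require Import structures.
From mathcomp Require Import all_boot all_order all_algebra.
From mathcomp Require Import all_classical all_reals all_analysis.
From mathcomp Require Import ring lra zify.
Import Order.TTheory GRing.Theory Num.Theory.
Local Open Scope ring_scope.

(* Cover B_p by 2^(k-1) balls y_j + s B_p and by 2^(l-1) cubes z_m + t B_oo,
   and pick a point a_jm in every nonempty intersection of a ball with a cube.
   A point x of B_p lies in some such intersection, and d = x - a_jm has
   ||d||_p <= 2^(1/p') s (the diameter of B_p, p' = min 1 p) and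
   ||d||_oo <= 2 t.  The interpolation inequality
   ||d||_q <= ||d||_p^(p/q) ||d||_oo^(1-p/q), together with
   2^(1-p/q) <= 2^((1-p/q)/p'), puts x in the q-ball of radius
   2^(1/p') s^(p/q) t^(1-p/q) around a_jm.  These 2^(k+l-2) centres bound
   e_(k+l-1) for all admissible s and t; then pass to the infima. *)

Section real_powers.
Context {R : realType}.
Implicit Types a b c r x y : R.

Lemma powRVK r x : r != 0 -> 0 <= x -> (x `^ r^-1) `^ r = x.
Proof. by move=> r0 x0; rewrite -powRrM mulVf // powRr1. Qed.

Lemma powRKV r x : r != 0 -> 0 <= x -> (x `^ r) `^ r^-1 = x.
Proof. by move=> r0 x0; rewrite -powRrM mulfV // powRr1. Qed.

Lemma gt0_ler_powR2 r : 0 < r ->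
  {in Num.nneg &, {mono (@powR R) ^~ r : u v / u <= v}}.
Proof. by move=> r0; apply: le_mono_in; apply: gt0_ltr_powR. Qed.

Lemma powR_midpoint_le r a b : 1 <= r -> 0 <= a -> 0 <= b ->
  ((a + b) / 2) `^ r <= (a `^ r + b `^ r) / 2.
Proof.
move=> r1 a0 b0.
have half_ge0 : (0 : R) <= 2^-1 by lra.
have half_le1 : (2^-1 : R) <= 1 by lra.
have := convex_powR r1 (Itv01 half_ge0 half_le1).
move=> /(_ a b); rewrite !inE /= !in_itv /= !andbT => /(_ a0 b0).
rewrite convRE [conv _ _ _]convRE /= /unstable.onem.
have -> : 1 - 2^-1 = 2^-1 :> R by field.
by rewrite -!mulrDr !(mulrC _ 2^-1).
Qed.

Lemma ler_powR_normB r a b : 1 <= r ->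
  `|a - b| `^ r <= 2 `^ (r - 1) * (`|a| `^ r + `|b| `^ r).
Proof.
move=> r1; have r0 : 0 < r by apply: lt_le_trans r1.
have [a0 b0] := (normr_ge0 a, normr_ge0 b).
apply: (@le_trans _ _ ((`|a| + `|b|) `^ r)).
  by rewrite ge0_ler_powR ?(ltW r0) ?nnegrE ?addr_ge0 ?ler_normB.
have -> : `|a| + `|b| = 2 * ((`|a| + `|b|) / 2) by field.
rewrite powRM ?divr_ge0 ?addr_ge0 // -(mulr_powRB1 (ler0n R 2) r0).
rewrite [2 * _]mulrC -mulrA ler_wpM2l ?powR_ge0 // mulrC -ler_pdivlMr //.
exact: powR_midpoint_le.
Qed.

Lemma ler_powRD r a b : 0 < r -> r <= 1 -> 0 <= a -> 0 <= b ->
  (a + b) `^ r <= a `^ r + b `^ r.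
Proof.
move=> r0 r1 a0 b0.
have [->|ab0] := eqVneq (a + b) 0.
  by rewrite powR0 ?gt_eqF ?addr_ge0 ?powR_ge0.
have abp : 0 < a + b by rewrite lt_neqAle eq_sym ab0 addr_ge0.
have le_powR t : 0 <= t <= 1 -> t <= t `^ r.
  case/andP=> t0 t1; have [->|tn0] := eqVneq t 0; first exact: powR_ge0.
  by apply: ger1_powR => //; rewrite lt_neqAle eq_sym tn0 t0.
have [ta tb] : a / (a + b) <= 1 /\ b / (a + b) <= 1.
  by rewrite !ler_pdivrMr // !mul1r lerDl lerDr.
have -> : a `^ r + b `^ r =
    (a + b) `^ r * ((a / (a + b)) `^ r + (b / (a + b)) `^ r).
  by rewrite mulrDr -!powRM ?divr_ge0 ?(ltW abp) // !(mulrC (a + b)) !divfK.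
rewrite -[leLHS]mulr1 ler_wpM2l ?powR_ge0 //.
apply: le_trans (lerD (le_powR _ _) (le_powR _ _)).
- by rewrite -mulrDl divff.
- by rewrite divr_ge0 ?ta ?(ltW abp).
- by rewrite divr_ge0 ?tb ?(ltW abp).
Qed.

Lemma ler_powR_geometric_mean b c x y t : 0 <= b -> b <= c ->
  0 <= x -> 0 <= y -> 0 <= t -> t <= 1 ->
  (c * x) `^ t * (b * y) `^ (1 - t) <= c * x `^ t * y `^ (1 - t).
Proof.
move=> b0 bc x0 y0 t0 t1; have c0 := le_trans b0 bc.
have cE : c `^ t * c `^ (1 - t) = c by rewrite -powRD ?subrKC ?powRr1 ?oner_eq0.
apply: (@le_trans _ _ ((c * x) `^ t * (c * y) `^ (1 - t))).
  rewrite ler_wpM2l ?powR_ge0 // ge0_ler_powR ?subr_ge0 ?nnegrE ?mulr_ge0 //.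
  by rewrite ler_wpM2r.
by rewrite !powRM // mulrACA cE mulrA.
Qed.

Lemma le_mul_inf_powR (S : set R) a b e : (S !=set0)%classic ->
  (forall s, S s -> 0 <= s) -> 0 <= e -> 0 <= b ->
  (forall s, S s -> a <= b * s `^ e) -> a <= b * inf S `^ e.
Proof.
move=> [s0 Ss0] S_ge0 e0 b0 aS.
have [e_eq0|e_neq0] := eqVneq e 0.
  by have := aS _ Ss0; rewrite e_eq0 !powRr0.
have e_gt0 : 0 < e by rewrite lt_neqAle eq_sym e_neq0.
have [a_le0|a_gt0] := leP a 0.
  exact: le_trans a_le0 (mulr_ge0 b0 (powR_ge0 _ _)).
have b_gt0 : 0 < b.
  rewrite lt_neqAle eq_sym b0 andbT; apply: contraTneq a_gt0 => b_eq0.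
  by rewrite -leNgt -(mul0r (s0 `^ e)) -b_eq0 aS.
have S_ne : (S !=set0)%classic by exists s0.
have ab0 : 0 <= a / b by rewrite divr_ge0 // ltW.
have lb : lbound S ((a / b) `^ e^-1).
  move=> s Ss; rewrite -(powRKV e s (lt0r_neq0 e_gt0) (S_ge0 _ Ss)).
  rewrite ge0_ler_powR ?invr_ge0 ?(ltW e_gt0) ?nnegrE ?powR_ge0 //.
  by rewrite ler_pdivrMr // mulrC aS.
rewrite mulrC -ler_pdivrMr // -(powRVK e (a / b) (lt0r_neq0 e_gt0) ab0).
rewrite ge0_ler_powR ?(ltW e_gt0) ?nnegrE ?powR_ge0 ?(lb_le_inf S_ne lb) //.
exact: lb_le_inf S_ne S_ge0.
Qed.

End real_powers.

Section lp_norms.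
Context {R : realType} {n : nat}.
Implicit Types (p q c M : R) (x y d : vec R n).

Definition lpsum p x := \sum_(i < n) `|x i| `^ p.

Lemma lpsum_ge0 p x : 0 <= lpsum p x.
Proof. by apply: sumr_ge0 => i _; apply: powR_ge0. Qed.

Lemma lpnorm_le p x c : 0 < p -> 0 <= c ->
  (lpnorm p x <= c) = (lpsum p x <= c `^ p).
Proof.
move=> p0 c0; rewrite -{1}(powRKV p c (lt0r_neq0 p0) c0) /lpnorm -/(lpsum p x).
by rewrite gt0_ler_powR2 ?invr_gt0 // nnegrE ?lpsum_ge0 ?powR_ge0.
Qed.

Lemma lpnorm_le1 p x : 0 < p -> (lpnorm p x <= 1) = (lpsum p x <= 1).
Proof. by move=> p0; rewrite lpnorm_le // powR1. Qed.

Lemma lpnormZ p c x : 0 < p -> 0 <= c ->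
  lpnorm p (fun i => c * x i) = c * lpnorm p x.
Proof.
move=> p0 c0; rewrite /lpnorm.
under eq_bigr do rewrite normrM powRM // (ger0_norm c0).
rewrite -mulr_sumr -/(lpsum p x) powRM ?powR_ge0 ?lpsum_ge0 //.
by rewrite (powRKV p c (lt0r_neq0 p0) c0).
Qed.

Lemma normr_le_lpnorm p x i : 0 < p -> `|x i| <= lpnorm p x.
Proof.
move=> p0; have term_le : `|x i| `^ p <= lpsum p x.
  by rewrite /lpsum (bigD1 i) //= lerDl sumr_ge0 // => j _; apply: powR_ge0.
rewrite -(powRKV p _ (lt0r_neq0 p0) (normr_ge0 (x i))).
by rewrite ge0_ler_powR ?invr_ge0 ?(ltW p0) ?nnegrE ?powR_ge0 ?lpsum_ge0.
Qed.

Lemma normr_le_linfnorm x i : `|x i| <= linfnorm x.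
Proof. exact: le_bigmax. Qed.

Lemma linfnorm_le_lpnorm p x : 0 < p -> linfnorm x <= lpnorm p x.
Proof.
move=> p0; apply: bigmax_le => [|i _]; first exact: powR_ge0.
exact: normr_le_lpnorm.
Qed.

Lemma lpnorm_sub_le p x y : 0 < p -> lpnorm p x <= 1 -> lpnorm p y <= 1 ->
  lpnorm p (fun i => x i - y i) <= 2 `^ (Num.min 1 p)^-1.
Proof.
move=> p0 x1 y1; rewrite lpnorm_le1 // in x1; rewrite lpnorm_le1 // in y1.
rewrite lpnorm_le ?powR_ge0 //.
have sum_le2 : lpsum p x + lpsum p y <= 2 by rewrite -[2]/(1 + 1 : R) lerD.
have [p_ge1|p_lt1] := leP 1 p.
- rewrite invr1 powRr1 ?ler0n // -(mulr_powRB1 (ler0n R 2) p0).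
  apply: (@le_trans _ _ (2 `^ (p - 1) * (lpsum p x + lpsum p y))).
    rewrite /lpsum -big_split mulr_sumr; apply: ler_sum => i _.
    exact: ler_powR_normB.
  by rewrite mulrC ler_wpM2r ?powR_ge0.
- rewrite powRVK ?lt0r_neq0 ?ler0n //; apply: le_trans _ sum_le2.
  rewrite /lpsum -big_split /=; apply: ler_sum => i _.
  apply: (@le_trans _ _ ((`|x i| + `|y i|) `^ p)).
    by rewrite ge0_ler_powR ?(ltW p0) ?nnegrE ?addr_ge0 ?ler_normB.
  exact: ler_powRD (ltW p_lt1) (normr_ge0 _) (normr_ge0 _).
Qed.

Lemma lpnorm_interpolation p q d M : 0 < p -> p <= q -> 0 <= M ->
  (forall i, `|d i| <= M) ->
  lpnorm q d <= lpnorm p d `^ (p / q) * M `^ (1 - p / q).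
Proof.
move=> p0 pq M0 dM; have q0 : 0 < q by apply: lt_le_trans pq.
rewrite lpnorm_le ?mulr_ge0 ?powR_ge0 // powRM ?powR_ge0 // -!powRrM.
have -> : p / q * q = p by rewrite divfK ?gt_eqF.
have -> : (1 - p / q) * q = q - p by rewrite mulrBl mul1r divfK ?gt_eqF.
rewrite mulVf ?lt0r_neq0 // powRr1 ?lpsum_ge0 // /lpsum mulr_suml.
apply: ler_sum => i _.
have -> : `|d i| `^ q = `|d i| `^ p * `|d i| `^ (q - p).
  by rewrite -powRD subrKC // gt_eqF.
by rewrite ler_wpM2l ?powR_ge0 // ge0_ler_powR ?subr_ge0 ?nnegrE.
Qed.

Lemma lpnorm_interpolation_le p q d r1 r2 : 0 < p -> p <= q ->
  0 <= r1 -> 0 <= r2 ->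
  lpnorm p d <= 2 `^ (Num.min 1 p)^-1 * r1 -> (forall i, `|d i| <= 2 * r2) ->
  lpnorm q d <= 2 `^ (Num.min 1 p)^-1 * r1 `^ (p / q) * r2 `^ (1 - p / q).
Proof.
move=> p0 pq r1_ge0 r2_ge0 dp dM; have q0 : 0 < q by apply: lt_le_trans pq.
set C := 2 `^ (Num.min 1 p)^-1 in dp *.
have two_le_C : 2 <= C.
  rewrite -[leLHS]powRr1 ?ler0n // ler_powR ?ler1n // invf_ge1 ?ge_min ?lexx //.
  by rewrite lt_min ltr01.
have theta_ge0 : 0 <= p / q by rewrite divr_ge0 ?ltW.
have theta_le1 : p / q <= 1 by rewrite ler_pdivrMr // mul1r.
have M_ge0 : 0 <= 2 * r2 by rewrite mulr_ge0.
apply: le_trans (lpnorm_interpolation p q d (2 * r2) p0 pq M_ge0 dM) _.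
apply: le_trans (ler_powR_geometric_mean 2 C r1 r2 (p / q) (ler0n R 2)
  two_le_C r1_ge0 r2_ge0 theta_ge0 theta_le1).
by rewrite ler_wpM2r ?powR_ge0 // ge0_ler_powR // nnegrE ?mulr_ge0 ?powR_ge0.
Qed.

End lp_norms.

Section coverings.
Context {R : realType} {n : nat}.
Implicit Types (nX nY : vec R n -> R) (p q r : R).

Definition covers {I : Type} nX nY (y : I -> vec R n) r :=
  forall x, nX x <= 1 -> exists (j : I) (z : vec R n),
    nY z <= 1 /\ x = (fun i => y j i + r * z i).

Definition entropy_radii nX nY k : set R :=
  [set r | 0 < r /\
     exists y : 'I_(2 ^ k.-1) -> vec R n, covers nX nY y r]%classic.

Lemma entropy_idE nX nY k : entropy_id nX nY k = inf (entropy_radii nX nY k).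
Proof. by []. Qed.

Lemma entropy_radii_ge0 nX nY k r : entropy_radii nX nY k r -> 0 <= r.
Proof. by case=> /ltW. Qed.

Lemma entropy_radiiN0 nX nY k : (forall x, nX x <= 1 -> nY x <= 1) ->
  (entropy_radii nX nY k !=set0)%classic.
Proof.
move=> XY; exists 1; split => //; exists (fun _ _ => 0) => x /XY x1.
exists (Ordinal (expn_gt0 2 k.-1)), x; split => //.
by apply/funext => i; rewrite add0r mul1r.
Qed.

Lemma entropy_id_le nX nY k r :
  entropy_radii nX nY k r -> entropy_id nX nY k <= r.
Proof. by apply: ge_inf; exists 0 => s /entropy_radii_ge0. Qed.

Lemma covers_ord {I : finType} {nX nY} {y : I -> vec R n} {r} {N : nat} :
  #|I| = N -> covers nX nY y r ->
  exists y' : 'I_N -> vec R n, covers nX nY y' r.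
Proof.
move=> <- yr; exists (fun t => y (enum_val t)) => x /yr [j [z zx]].
by exists (enum_rank j), z; rewrite enum_rankK.
Qed.

Lemma covers_interpolation {I J : Type} {p q r1 r2}
    {y : I -> vec R n} {z : J -> vec R n} :
  0 < p -> p <= q -> 0 < r1 -> 0 < r2 ->
  covers (lpnorm p) (lpnorm p) y r1 ->
  covers (lpnorm p) (@linfnorm R n) z r2 ->
  exists w : I * J -> vec R n, covers (lpnorm p) (lpnorm q) w
    (2 `^ (Num.min 1 p)^-1 * r1 `^ (p / q) * r2 `^ (1 - p / q)).
Proof.
move=> p0 pq r1_gt0 r2_gt0 yr zr.
set r := 2 `^ (Num.min 1 p)^-1 * r1 `^ (p / q) * r2 `^ (1 - p / q).
have r_gt0 : 0 < r by rewrite !mulr_gt0 ?powR_gt0.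
pose cell (jm : I * J) : set (vec R n) := [set a |
  (exists u, lpnorm p u <= 1 /\ a = (fun i => y jm.1 i + r1 * u i)) /\
  (exists v, linfnorm v <= 1 /\ a = (fun i => z jm.2 i + r2 * v i))]%classic.
exists (fun jm => xget (fun=> 0) (cell jm)) => x x1.
have [j [u [u1 xE]]] := yr x x1; have [m [v [v1 xE']]] := zr x x1.
have cell_x : cell (j, m) x by split; [exists u | exists v].
have [[u' [u'1 aE]] [v' [v'1 aE']]] := xgetPex (fun=> 0) (ex_intro _ x cell_x).
set a := xget _ _ in aE aE' *.
have d_le : lpnorm q (fun i => x i - a i) <= r.
  apply: lpnorm_interpolation_le (ltW r1_gt0) (ltW r2_gt0) _ _ => //.
    have -> : (fun i => x i - a i) = (fun i => r1 * (u i - u' i)).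
      by apply/funext => i; rewrite xE aE /= opprD addrACA subrr add0r mulrBr.
    rewrite lpnormZ ?(ltW r1_gt0) // mulrC ler_wpM2r ?(ltW r1_gt0) //.
    exact: lpnorm_sub_le.
  move=> i; rewrite xE' aE' /= opprD addrACA subrr add0r -mulrBr normrM.
  rewrite gtr0_norm // mulrC ler_wpM2r ?(ltW r2_gt0) //.
  rewrite (le_trans (ler_normB _ _)) //.
  by rewrite -[2]/(1 + 1 : R) lerD // (le_trans (normr_le_linfnorm _ _)).
exists (j, m), (fun i => r^-1 * (x i - a i)); split.
  rewrite lpnormZ ?invr_ge0 ?(ltW r_gt0) ?(lt_le_trans p0 pq) //.
  by rewrite ler_pdivrMl // mulr1.
by apply/funext => i; rewrite mulrA divff ?gt_eqF // mul1r addrC subrK.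
Qed.

End coverings.

Theorem lemma8 (R : realType) (p q : R) (k l n : nat)
  (hp : 0 < p) (hpq : p <= q) (hk : (0 < k)%N) (hl : (0 < l)%N) (hn : (0 < n)%N) :
  entropy_id (lpnorm (n:=n) p) (lpnorm (n:=n) q) (k + l - 1)
  <= 2 `^ ((Num.min 1 p)^-1)
     * (entropy_id (lpnorm (n:=n) p) (lpnorm (n:=n) p) k) `^ (p / q)
     * (entropy_id (lpnorm (n:=n) p) (@linfnorm R n) l) `^ (1 - p / q).
Proof.
have q_gt0 : 0 < q := lt_le_trans hp hpq.
have theta_ge0 : 0 <= p / q by rewrite divr_ge0 ?ltW.
have theta_le1 : p / q <= 1 by rewrite ler_pdivrMr ?mul1r.
have cells : #|{: 'I_(2 ^ k.-1) * 'I_(2 ^ l.-1)}| = (2 ^ (k + l - 1).-1)%N.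
  by rewrite card_prod !card_ord -expnD; congr (2 ^ _)%N; lia.
have cover s t : entropy_radii (lpnorm (n:=n) p) (lpnorm p) k s ->
    entropy_radii (lpnorm (n:=n) p) (@linfnorm R n) l t ->
    entropy_id (lpnorm (n:=n) p) (lpnorm q) (k + l - 1) <=
    2 `^ (Num.min 1 p)^-1 * s `^ (p / q) * t `^ (1 - p / q).
  move=> [s_gt0 [y ys]] [t_gt0 [z zt]].
  have [w ws] := covers_interpolation hp hpq s_gt0 t_gt0 ys zt.
  have [w' w's] := covers_ord cells ws.
  by apply: entropy_id_le; split; [rewrite !mulr_gt0 ?powR_gt0 | exists w'].
rewrite [X in X `^ (1 - _)]entropy_idE.
apply: le_mul_inf_powR.
- apply: entropy_radiiN0 => x; apply: le_trans; exact: linfnorm_le_lpnorm.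
- exact: entropy_radii_ge0.
- by rewrite subr_ge0.
- by rewrite mulr_ge0 ?powR_ge0.
move=> t St; rewrite mulrAC [X in X `^ (p / q)]entropy_idE.
apply: le_mul_inf_powR => //.
- exact: entropy_radiiN0.
- exact: entropy_radii_ge0.
- by rewrite mulr_ge0 ?powR_ge0.
by move=> s Ss; rewrite mulrAC; apply: cover.
Qed.
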